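(* Let $n,r\ge 1$ and let $D=\{(\mathbf s_1,\mathbf t_1),\dots,(\mathbf s_r,\mathbf t_r)\}\subset \mathbb F_2^n\times\mathbb F_2^n$ be a data set, with $\mathbf s_j=(s_{j,1},\dots,s_{j,n})$ and $\mathbf t_j=(t_{j,1},\dots,t_{j,n})$. Fix a gene index $i\in\{1,\dots,n\}$. Put $$f_i=\sum_{j=1}^r t_{j,i}\prod_{e=1}^n\bigl(1-(x_e-s_{j,e})\bigr),\qquad p=\prod_{j=1}^r\Bigl(1-\prod_{e=1}^n\bigl(1-(x_e-s_{j,e})\bigr)\Bigr),$$ and let $I=\langle p\rangle$ in $R=\mathbb F_2[x_1,\dots,x_n]/\langle x_e^2-x_e: 1\le e\le n\rangle$; this $I$ is the ideal of Boolean polynomials vanishing on $\{\mathbf s_1,\dots,\mathbf s_r\}$, so $f_i+I$ is the set of Boolean functions $h$ with $h(\mathbf s_j)=t_{j,i}$ for all $j$. Introduce indeterminates $b_H$, $H\subseteq[n]$, let $g=\sum_{H\subseteq[n]}b_H\prod_{l\in H}x_l$, and write the reduction of $f_i+g\,p$ modulo $\langle x_e^2-x_e\rangle$ as $\sum_{S\subseteq[n]}W_S\prod_{l\in S}x_l$, where each $W_S=W_S(b_H,\mathbf s_j,\mathbf t_j)$ is a polynomial (affine-linear over $\mathbb F_2$) in the $b_H$. Consider the ring homomorphism $$\Phi:\overline{\mathbb F}_2[\{c_S:S\subseteq[n]\}]\to\overline{\mathbb F}_2[\{b_H:H\subseteq[n]\}],\qquad c_S\mapsto W_S .$$ Then $\ker(\Phi)$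 is the ideal of all polynomials that fit the data set $D$ (i.e. the vanishing ideal of the set of coefficient vectors $(W_S)_S$ obtained as the $b_H$ vary); in particular, the $\mathbb F_2$-rational points of the variety $\mathbb V(\ker\Phi)\subseteq\overline{\mathbb F}_2^{\,2^n}$, identified with Boolean polynomials via $(c_S)_{S\subseteq[n]}\leftrightarrow\sum_S c_S\prod_{l\in S}x_l$, are exactly the models fitting $D$, namely the elements of $f_i+I$.
   Context: Boolean functions $\mathbb F_2^n\to\mathbb F_2$ are identified with elements of $R=\mathbb F_2[x_1,\dots,x_n]/\langle x_e^2-x_e\rangle$, each written uniquely as $\sum_{S\subseteq[n]}c_S\prod_{l\in S}x_l$ with $c_S\in\mathbb F_2$, and hence with vectors $(c_S)_{S\subseteq[n]}\in\mathbb F_2^{2^n}$. $[n]=\{1,\dots,n\}$. $\overline{\mathbb F}_2$ is the algebraic closure of $\mathbb F_2$. A model for gene $i$ ''fits'' $D$ if it maps $\mathbf s_j$ to $t_{j,i}$ for every $j$. *)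

From HB Require Import structures.
From mathcomp Require Import all_boot all_order all_algebra.
From mathcomp Require Import mpoly.
Set Implicit Arguments. Unset Strict Implicit. Unset Printing Implicit Defensive.
Import Order.TTheory GRing.Theory.
Local Open Scope ring_scope.

(* Subsets H of [n] = 'I_n are {set 'I_n}; the 2^n variables indexed by
   subsets are numbered via enum_rank. *)
Definition Nsub (n : nat) : nat := #|{: {set 'I_n}}|.
Definition sidx (n : nat) (H : {set 'I_n}) : 'I_(Nsub n) := enum_rank H.
Definition sval_of (n : nat) (k : 'I_(Nsub n)) : {set 'I_n} := enum_val k.

Definition emb2 (A : nzRingType) (a : 'F_2) : A := (val a)%:R.

Definition xmon (A : comNzRingType) (n : nat) (S : {set 'I_n}) : {mpoly A[n]} :=
  \prod_(l in S) 'X_l.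

(* Reduction modulo <x_e^2 - x_e>: since x_e^k = x_e for k >= 1, the monomial
   with exponent vector m reduces to xmon (support of m).  [red q S] is the
   coefficient of xmon S in the (multilinear) reduction of q. *)
Definition red (A : comNzRingType) (n : nat) (q : {mpoly A[n]}) (S : {set 'I_n}) : A :=
  \sum_(m <- msupp q | [set l : 'I_n | (m l != 0)%N] == S) q@_m.

Definition chi (A : comNzRingType) (n r : nat) (s : 'I_r -> 'I_n -> 'F_2) (j : 'I_r)
  : {mpoly A[n]} :=
  \prod_(e < n) (1 - ('X_e - (emb2 A (s j e))%:MP)).

Definition fpol (A : comNzRingType) (n r : nat) (s t : 'I_r -> 'I_n -> 'F_2) (i : 'I_n)
  : {mpoly A[n]} :=
  \sum_(j < r) (emb2 A (t j i))%:MP * chi A s j.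

Definition ppol (A : comNzRingType) (n r : nat) (s : 'I_r -> 'I_n -> 'F_2)
  : {mpoly A[n]} :=
  \prod_(j < r) (1 - chi A s j).

Definition gpol (K : fieldType) (n : nat) : {mpoly {mpoly K[Nsub n]}[n]} :=
  \sum_(H : {set 'I_n}) ('X_(sidx H) : {mpoly K[Nsub n]})%:MP * xmon {mpoly K[Nsub n]} H.

Definition Wpol (K : fieldType) (n r : nat) (s t : 'I_r -> 'I_n -> 'F_2) (i : 'I_n)
  (k : 'I_(Nsub n)) : {mpoly K[Nsub n]} :=
  red (fpol {mpoly K[Nsub n]} s t i + gpol K n * ppol {mpoly K[Nsub n]} s) (sval_of k).

(* Phi : K[c_S] -> K[b_H], c_S |-> W_S (c_S is the variable 'X_(sidx S)). *)
Definition Phi (K : fieldType) (n r : nat) (s t : 'I_r -> 'I_n -> 'F_2) (i : 'I_n)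
  (P : {mpoly K[Nsub n]}) : {mpoly K[Nsub n]} :=
  P \mPo [tuple Wpol K s t i k | k < Nsub n].

Definition boolfun (n : nat) (c : {set 'I_n} -> 'F_2) (x : 'I_n -> 'F_2) : 'F_2 :=
  \sum_(S : {set 'I_n}) c S * \prod_(l in S) x l.

Definition fits (n r : nat) (s t : 'I_r -> 'I_n -> 'F_2) (i : 'I_n)
  (h : ('I_n -> 'F_2) -> 'F_2) : Prop :=
  forall j : 'I_r, h (s j) = t j i.

(* A Boolean polynomial evaluated at a point of F_2^n (or at any idempotent
   point) only sees its multilinear reduction, and a multilinear form is
   determined by its values at the 0/1 points.  At a point y, f_i + g p takes
   the value t_{j,i} if y = s_j (where p vanishes) and g(y) otherwise (where
   f_i vanishes and p = 1): so the coefficient vectors (W_S(b))_S are those of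
   the models fitting D, i.e. of f_i + <p>.
   Phi(P) is P evaluated at (W_S)_S, and since K is infinite a polynomial
   vanishing on all of K^N is zero: this identifies ker Phi with the vanishing
   ideal of the image.  For an F_2-point c, the linear polynomials
   sum_S c_S s_j^S - t_{j,i} lie in ker Phi, which forces c to fit D;
   conversely a fitting model is some W(b), where ker Phi vanishes. *)

From HB Require Import structures.
From mathcomp Require Import all_boot all_order all_algebra.
From mathcomp Require Import mpoly.
From Stdlib Require Import FunctionalExtensionality.
Import GRing.Theory.
Local Open Scope ring_scope.
Set Implicit Arguments. Unset Strict Implicit.

Lemma F2_cases (a : 'F_2) : a = 0 \/ a = 1.
Proof. by case: a => [[|[|m]] // ltm2]; [left|right]; apply/val_inj. Qed.

Lemma F2_idem (a : 'F_2) : a * a = a.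
Proof. by case: (F2_cases a) => ->; rewrite ?mulr0 ?mulr1. Qed.

Lemma emb2_0 (A : nzRingType) : emb2 A 0 = 0. Proof. by []. Qed.
Lemma emb2_1 (A : nzRingType) : emb2 A 1 = 1. Proof. by []. Qed.

Lemma emb2_id (a : 'F_2) : emb2 'F_2 a = a.
Proof. by case: (F2_cases a) => ->. Qed.

Lemma emb2_idem (A : nzRingType) (a : 'F_2) : emb2 A a * emb2 A a = emb2 A a.
Proof. by case: (F2_cases a) => ->; rewrite ?emb2_0 ?emb2_1 ?mulr0 ?mulr1. Qed.

Lemma emb2_nat (A : nzRingType) (b : bool) : emb2 A b%:R = b%:R.
Proof. by case: b. Qed.

Lemma emb2_inj (A : nzRingType) : injective (emb2 A).
Proof.
move=> a b; case: (F2_cases a) => ->; case: (F2_cases b) => -> //.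
  by rewrite emb2_0 emb2_1 => /eqP; rewrite eq_sym oner_eq0.
by rewrite emb2_0 emb2_1 => /eqP; rewrite oner_eq0.
Qed.

(* The hypothesis is unused by the map but keeps it an explicit argument, so
   that the morphism instances below can be found by unification. *)
Definition emb2_char2 (A : nzRingType) of 2%:R = 0 :> A : 'F_2 -> A := emb2 A.

Section Char2Embedding.
Variables (A : nzRingType) (A2 : 2%:R = 0 :> A).

Lemma emb2_char2E a : emb2_char2 A2 a = emb2 A a. Proof. by []. Qed.

Lemma emb2_char2_is_additive : nmod_morphism (emb2_char2 A2).
Proof.
split=> // a b; rewrite /emb2_char2.
by case: (F2_cases a) => ->; case: (F2_cases b) => ->; rewrite ?add0r ?addr0.
Qed.

Lemma emb2_char2_is_multiplicative : monoid_morphism (emb2_char2 A2).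
Proof.
split=> // a b; rewrite /emb2_char2.
by case: (F2_cases a) => ->; case: (F2_cases b) => ->; rewrite ?mul0r ?mulr0 ?mulr1.
Qed.

HB.instance Definition _ :=
  GRing.isNmodMorphism.Build 'F_2 A (emb2_char2 A2) emb2_char2_is_additive.
HB.instance Definition _ :=
  GRing.isMonoidMorphism.Build 'F_2 A (emb2_char2 A2) emb2_char2_is_multiplicative.

End Char2Embedding.

Lemma sidxK n (S : {set 'I_n}) : sval_of (sidx S) = S.
Proof. exact: enum_rankK. Qed.

Lemma sval_ofK n (k : 'I_(Nsub n)) : sidx (sval_of k) = k.
Proof. exact: enum_valK. Qed.

Definition mnm_supp n (m : 'X_{1..n}) : {set 'I_n} := [set l | m l != 0%N].

Section MultilinearReduction.
Variables (C A : comNzRingType) (phi : {rmorphism C -> A}) (n : nat).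
Variables (x : 'I_n -> A) (x_idem : forall l, x l * x l = x l).

Lemma mmap1_idem (m : 'X_{1..n}) : mmap1 x m = \prod_(l in mnm_supp m) x l.
Proof.
rewrite /mmap1 (bigID (fun l => m l != 0%N)) /= [X in _ * X]big1 ?mulr1.
  apply: eq_big => l; first by rewrite inE.
  by case: (m l) => // e _; elim: e => // e IHe; rewrite exprS IHe x_idem.
by move=> l /negPn /eqP ->.
Qed.

Lemma mmap_red (q : {mpoly C[n]}) :
  mmap phi x q = \sum_(S : {set 'I_n}) phi (red q S) * \prod_(l in S) x l.
Proof.
rewrite /mmap; under [RHS]eq_bigr do rewrite /red rmorph_sum mulr_suml big_mkcond.
rewrite exchange_big /=; apply: eq_bigr => m _.
by rewrite -big_mkcond /= (big_pred1 (mnm_supp m)) ?mmap1_idem // => S; rewrite eq_sym.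
Qed.

End MultilinearReduction.

Lemma prod_indicator (A : comNzRingType) n (S T : {set 'I_n}) :
  \prod_(l in S) ((l \in T)%:R : A) = (S \subset T)%:R.
Proof.
have [/subsetP ST|/subsetPn[l lS lT]] := boolP (S \subset T).
  by rewrite big1 // => l /ST ->.
by rewrite (bigD1 l) //= (negbTE lT) mul0r.
Qed.

(* Moebius inversion: at the indicator vector of T a multilinear form sums the
   coefficients of the subsets of T. *)
Lemma multilinear_coef_uniq (A : comNzRingType) n (a a' : {set 'I_n} -> A) :
  (forall T : {set 'I_n}, \sum_S a S * \prod_(l in S) ((l \in T)%:R : A)
                        = \sum_S a' S * \prod_(l in S) ((l \in T)%:R : A)) ->
  a =1 a'.
Proof.
move=> aa' S; apply/eqP; rewrite -subr_eq0; apply/eqP.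
elim: {S}#|S|.+1 {-2}S (ltnSn #|S|) => // k IHk S ltSk.
have := aa' S; under eq_bigr do rewrite prod_indicator.
under [in RHS]eq_bigr do rewrite prod_indicator.
move/eqP; rewrite -subr_eq0 -sumrB (bigD1 S) //= subxx !mulr1 big1 ?addr0 => [/eqP //|T TS].
have [sTS|] := boolP (T \subset S); last by rewrite !mulr0 subrr.
rewrite !mulr1 IHk //; apply: leq_trans (proper_card _) ltSk.
by rewrite properEneq TS sTS.
Qed.

Lemma poly_eval_eq0 (K : closedFieldType) (q : {poly K}) : (forall x, q.[x] = 0) -> q = 0.
Proof.
move=> q0; apply/eqP; apply: contraT => qn0.
have size_qX1 : size (q * 'X - 1) = (size q).+1.
  by rewrite size_polyDl ?size_mulX // size_polyN size_poly1 ltnS lt0n size_poly_eq0.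
have : size (q * 'X - 1) != 1%N by rewrite size_qX1 eqSS size_poly_eq0.
case/closed_rootP => x /rootP.
by rewrite !hornerE q0 mul0r sub0r => /eqP; rewrite oppr_eq0 oner_eq0.
Qed.

Definition cons_last (T : Type) k (v : 'I_k -> T) (x : T) (i : 'I_k.+1) : T :=
  oapp v x (unlift ord_max i).

Lemma cons_last_max (T : Type) k (v : 'I_k -> T) x : cons_last v x ord_max = x.
Proof. by rewrite /cons_last unlift_none. Qed.

Lemma cons_last_widen (T : Type) k (v : 'I_k -> T) x i :
  cons_last v x (widen_ord (leqnSn k) i) = v i.
Proof.
have -> : widen_ord (leqnSn k) i = lift ord_max i by apply/val_inj/esym/lift_max.
by rewrite /cons_last liftK.
Qed.

Section MuniEval.
Variables (R : comNzRingType) (k : nat).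
Implicit Types (p : {mpoly R[k.+1]}) (m : 'X_{1..k.+1}).

Definition mnm_init m : 'X_{1..k} := [multinom m (widen_ord (leqnSn k) i) | i < k].

Lemma muni_coef p j :
  (muni p)`_j = \sum_(m <- msupp p | m ord_max == j) p@_m *: 'X_[mnm_init m].
Proof.
rewrite muniE coef_sum [RHS]big_mkcond /=; apply: eq_bigr => m _.
by rewrite coefZ coefXn eq_sym; case: eqP; rewrite ?mulr0 ?mulr1.
Qed.

Lemma mcoeff_muni p m : ((muni p)`_(m ord_max))@_(mnm_init m) = p@_m.
Proof.
have init_last m' : (m' ord_max == m ord_max) && (mnm_init m' == mnm_init m) = (m' == m).
  apply/idP/eqP => [/andP[/eqP e1 /eqP e2]|->]; last by rewrite !eqxx.
  apply/mnmP => l; case: (unliftP ord_max l) => [l'|] -> //.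
  have -> : lift ord_max l' = widen_ord (leqnSn k) l' by apply/val_inj/lift_max.
  by have := congr1 (fun mm : 'X_{1..k} => mm l') e2; rewrite !mnmE.
rewrite muni_coef raddf_sum /= [in RHS](mpolyE p) raddf_sum /= [LHS]big_mkcond /=.
apply: eq_bigr => m' _; rewrite !mcoeffZ !mcoeffX -init_last.
by case: (m' ord_max == m ord_max); rewrite ?mulr0.
Qed.

Lemma muni_meval p v x : (map_poly (meval v) (muni p)).[x] = p.@[cons_last v x].
Proof.
rewrite muniE rmorph_sum horner_sum mevalE; apply: eq_bigr => m _ /=.
rewrite map_polyZ hornerZ map_polyXn hornerXn /= mevalZ mevalX.
rewrite big_ord_recr /= cons_last_max -mulrA; congr (_ * (_ * _)).
by apply: eq_bigr => l _; rewrite cons_last_widen mnmE.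
Qed.

End MuniEval.

Lemma mpoly_eval_eq0 (K : closedFieldType) k (p : {mpoly K[k]}) :
  (forall v, p.@[v] = 0) -> p = 0.
Proof.
elim: k p => [|k IHk] p p0; apply/mpolyP => m; rewrite mcoeff0.
  have mnm0_eq m' : m' = m by apply/mnmP => -[].
  rewrite -(p0 (fun _ => 0)) mevalE [in LHS](mpolyE p) raddf_sum /=.
  by apply: eq_bigr => m' _; rewrite mcoeffZ mcoeffX (mnm0_eq m') eqxx big_ord0.
rewrite -mcoeff_muni; suff -> : (muni p)`_(m ord_max) = 0 by rewrite mcoeff0.
apply: IHk => v; rewrite -coef_map.
suff -> : map_poly (meval v) (muni p) = 0 by rewrite coef0.
by apply: poly_eval_eq0 => x; rewrite muni_meval p0.
Qed.

Lemma F2_eq_indicator (a b : 'F_2) : 1 - (a - b) = (a == b)%:R.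
Proof. by case: (F2_cases a) => ->; case: (F2_cases b) => ->; apply/val_inj. Qed.

Section DataPolynomials.
Variables (n r : nat) (s t : 'I_r -> 'I_n -> 'F_2) (i : 'I_n).

Definition is_datum (y : 'I_n -> 'F_2) (j : 'I_r) : bool := [forall e, y e == s j e].
Definition fval (y : 'I_n -> 'F_2) : 'F_2 := \sum_(j < r) t j i * (is_datum y j)%:R.
Definition pval (y : 'I_n -> 'F_2) : 'F_2 := \prod_(j < r) (1 - (is_datum y j)%:R).

Lemma datum_indicator y j : \prod_(e < n) (1 - (y e - s j e)) = (is_datum y j)%:R.
Proof.
under eq_bigr do rewrite F2_eq_indicator.
have [/forallP ys|/forallPn[e /negbTE ye]] := boolP (is_datum y j).
  by rewrite big1 // => e _; rewrite ys.
by rewrite (bigD1 e) //= ye mul0r.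
Qed.

Section Transfer.
Variables (C A : comNzRingType) (phi : {rmorphism C -> A}) (A2 : 2%:R = 0 :> A).
Let embv (y : 'I_n -> 'F_2) (e : 'I_n) : A := emb2 A (y e).

Lemma mmap_emb2C (x : 'I_n -> A) a : mmap phi x (emb2 C a)%:MP = emb2 A a.
Proof. by rewrite mmapC /= /emb2 rmorph_nat. Qed.

Lemma mmapXU (x : 'I_n -> A) e : mmap phi x 'X_e = x e.
Proof. by rewrite mmapX mmap1U. Qed.

Lemma chi_mmap y j : mmap phi (embv y) (chi C s j) = (is_datum y j)%:R.
Proof.
rewrite /chi rmorph_prod -[RHS](rmorph_nat (emb2_char2 A2)) -datum_indicator rmorph_prod.
by apply: eq_bigr => e _; rewrite /= !rmorphB rmorph1 /= mmapXU mmap_emb2C.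
Qed.

Lemma fpol_mmap y : mmap phi (embv y) (fpol C s t i) = emb2 A (fval y).
Proof.
rewrite /fpol -emb2_char2E !rmorph_sum; apply: eq_bigr => j _.
by rewrite !rmorphM /= mmap_emb2C chi_mmap rmorph_nat.
Qed.

Lemma ppol_mmap y : mmap phi (embv y) (ppol C s) = emb2 A (pval y).
Proof.
rewrite /ppol -emb2_char2E !rmorph_prod; apply: eq_bigr => j _.
by rewrite !rmorphB !rmorph1 /= chi_mmap rmorph_nat.
Qed.

End Transfer.
End DataPolynomials.

Lemma F2_char2 : 2%:R = 0 :> 'F_2. Proof. exact/val_inj. Qed.

Lemma meval_F2 n (q : {mpoly 'F_2[n]}) y :
  q.@[y] = mmap idfun (fun e => emb2 'F_2 (y e)) q.
Proof. by rewrite -[RHS]/(meval _ q); apply: meval_eq => e; rewrite emb2_id. Qed.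

Lemma meval_red_F2 n (q : {mpoly 'F_2[n]}) y :
  q.@[y] = \sum_(S : {set 'I_n}) red q S * \prod_(l in S) y l.
Proof. by rewrite -[LHS]/(mmap idfun y q) (mmap_red idfun (fun l => F2_idem (y l))). Qed.

Lemma boolfun_red n (q : {mpoly 'F_2[n]}) y : boolfun (red q) y = q.@[y].
Proof. by rewrite meval_red_F2. Qed.

Definition boolfun_mpoly n (c : {set 'I_n} -> 'F_2) : {mpoly 'F_2[n]} :=
  \sum_(S : {set 'I_n}) (c S)%:MP * xmon 'F_2 S.

Lemma boolfun_mpolyE n (c : {set 'I_n} -> 'F_2) y :
  (boolfun_mpoly c).@[y] = boolfun c y.
Proof.
rewrite rmorph_sum; apply: eq_bigr => S _.
rewrite /= mevalM mevalC /xmon rmorph_prod; congr (_ * _).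
by apply: eq_bigr => l _; rewrite /= mevalXU.
Qed.

Section Data.
Variables (n r : nat) (s t : 'I_r -> 'I_n -> 'F_2) (hs : injective s) (i : 'I_n).

Lemma is_datum_eq y j : is_datum s y j -> y = s j.
Proof. by move/forallP=> ys; apply: functional_extensionality => e; apply/eqP. Qed.

Lemma is_datum_data j j' : is_datum s (s j) j' = (j == j').
Proof. by apply/idP/eqP => [/is_datum_eq/hs|->] //; apply/forallP. Qed.

Lemma fval_data j : fval s t i (s j) = t j i.
Proof.
rewrite /fval (bigD1 j) //= is_datum_data eqxx mulr1 big1 ?addr0 // => j' j'j.
by rewrite is_datum_data eq_sym (negbTE j'j) mulr0.
Qed.

Lemma pval_data j : pval s (s j) = 0.
Proof. by rewrite /pval (bigD1 j) //= is_datum_data eqxx subrr mul0r. Qed.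

Lemma pval_off_data y : ~~ [exists j, is_datum s y j] -> pval s y = 1.
Proof. by move/existsPn=> yD; rewrite /pval big1 // => j _; rewrite (negbTE (yD j)) subr0. Qed.

Lemma fpol_eval_F2 y : (fpol 'F_2 s t i).@[y] = fval s t i y.
Proof. by rewrite meval_F2 (fpol_mmap s t i idfun F2_char2) emb2_id. Qed.

Lemma ppol_eval_F2 y : (ppol 'F_2 s).@[y] = pval s y.
Proof. by rewrite meval_F2 (ppol_mmap s idfun F2_char2) emb2_id. Qed.

Lemma fits_iff_coset (c : {set 'I_n} -> 'F_2) :
  fits s t i (boolfun c) <->
  exists g : {mpoly 'F_2[n]},
    forall S : {set 'I_n}, c S = red (fpol 'F_2 s t i + g * ppol 'F_2 s) S.
Proof.
split=> [c_fits|[g cE] j]; last first.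
  under [LHS]eq_bigr do rewrite cE.
  rewrite -meval_red_F2 mevalD mevalM fpol_eval_F2 ppol_eval_F2.
  by rewrite pval_data mulr0 addr0 fval_data.
set g := boolfun_mpoly c - fpol 'F_2 s t i; exists g.
suff coset_eval y : boolfun c y = (fpol 'F_2 s t i + g * ppol 'F_2 s).@[y].
  move=> S; apply: multilinear_coef_uniq => T {S}.
  by rewrite -[LHS]/(boolfun c _) coset_eval -boolfun_red.
rewrite mevalD mevalM mevalB boolfun_mpolyE fpol_eval_F2 ppol_eval_F2.
have [/existsP[j /is_datum_eq ->]|yD] := boolP [exists j, is_datum s y j].
  by rewrite pval_data mulr0 addr0 fval_data c_fits.
by rewrite pval_off_data // mulr1 addrC subrK.
Qed.

End Data.

Section KernelOfPhi.
Variables (K : closedFieldType) (hK : 2%N \in [pchar K]).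
Variables (n r : nat) (s t : 'I_r -> 'I_n -> 'F_2) (hs : injective s) (i : 'I_n).

Let K2 : 2%:R = 0 :> K := pcharf0 hK.

Lemma Phi_meval P b : (Phi s t i P).@[b] = P.@[fun k => (Wpol K s t i k).@[b]].
Proof. by rewrite comp_mpoly_meval; apply: meval_eq => k; rewrite tnth_mktuple. Qed.

Lemma Phi_eq0 P :
  Phi s t i P = 0 <-> forall b, P.@[fun k => (Wpol K s t i k).@[b]] = 0.
Proof.
split=> [P0 b|P0]; first by rewrite -Phi_meval P0 meval0.
by apply: mpoly_eval_eq0 => b; rewrite Phi_meval.
Qed.

Lemma Wpol_meval_sum (b : 'I_(Nsub n) -> K) (y : 'I_n -> 'F_2) :
  \sum_(S : {set 'I_n}) (Wpol K s t i (sidx S)).@[b] * \prod_(l in S) emb2 K (y l)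
  = emb2 K (fval s t i y)
    + (\sum_(H : {set 'I_n}) b (sidx H) * \prod_(l in H) emb2 K (y l)) * emb2 K (pval s y).
Proof.
under eq_bigr do rewrite /Wpol sidxK.
rewrite -(mmap_red (meval b)) => [|l]; last exact: emb2_idem.
rewrite rmorphD rmorphM /= (fpol_mmap s t i (meval b) K2) (ppol_mmap s (meval b) K2).
congr (_ + _ * _); rewrite /gpol rmorph_sum; apply: eq_bigr => H _.
rewrite rmorphM /= mmapC /= mevalXU /xmon rmorph_prod; congr (_ * _).
by apply: eq_bigr => l _; rewrite /= mmapXU.
Qed.

Lemma emb2_boolfun (c : {set 'I_n} -> 'F_2) y :
  emb2 K (boolfun c y) = \sum_(S : {set 'I_n}) emb2 K (c S) * \prod_(l in S) emb2 K (y l).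
Proof.
rewrite -(emb2_char2E K2) rmorph_sum; apply: eq_bigr => S _.
by rewrite rmorphM rmorph_prod.
Qed.

Definition fit_constraint (j : 'I_r) : {mpoly K[Nsub n]} :=
  \sum_(S : {set 'I_n}) (\prod_(l in S) emb2 K (s j l)) *: 'X_(sidx S) - (emb2 K (t j i))%:MP.

Lemma fit_constraint_meval j v :
  (fit_constraint j).@[v]
  = \sum_(S : {set 'I_n}) v (sidx S) * \prod_(l in S) emb2 K (s j l) - emb2 K (t j i).
Proof.
rewrite rmorphB rmorph_sum /= mevalC; congr (_ - _); apply: eq_bigr => S _.
by rewrite mevalZ mevalXU mulrC.
Qed.

Lemma fit_constraint_in_ker j : Phi s t i (fit_constraint j) = 0.
Proof.
apply/Phi_eq0 => b; rewrite fit_constraint_meval.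
by rewrite Wpol_meval_sum fval_data // pval_data // emb2_0 mulr0 addr0 subrr.
Qed.

Lemma fits_of_ker_Phi_vanishing (c : {set 'I_n} -> 'F_2) :
  (forall P, Phi s t i P = 0 -> P.@[fun k => emb2 K (c (sval_of k))] = 0) ->
  fits s t i (boolfun c).
Proof.
move=> c_zero j; apply: (@emb2_inj K).
have /eqP := c_zero _ (fit_constraint_in_ker j).
rewrite fit_constraint_meval subr_eq0 emb2_boolfun => /eqP <-.
by apply: eq_bigr => S _; rewrite sidxK mulrC.
Qed.

(* Taking for b the coefficients of g realizes the model f_i + g p as W(b). *)
Lemma Wpol_meval_coset (g : {mpoly 'F_2[n]}) S :
  (Wpol K s t i (sidx S)).@[fun k => emb2 K (red g (sval_of k))]
  = emb2 K (red (fpol 'F_2 s t i + g * ppol 'F_2 s) S).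
Proof.
move: S; apply: multilinear_coef_uniq => T.
pose y l := ((l \in T)%:R : 'F_2).
have indicatorE S : \prod_(l in S) ((l \in T)%:R : K) = \prod_(l in S) emb2 K (y l).
  by apply: eq_bigr => l _; rewrite emb2_nat.
under eq_bigr do rewrite indicatorE; under [RHS]eq_bigr do rewrite indicatorE.
rewrite Wpol_meval_sum (eq_bigr (fun H => emb2 K (red g H) * \prod_(l in H) emb2 K (y l))).
  rewrite -!emb2_boolfun !boolfun_red mevalD mevalM fpol_eval_F2 ppol_eval_F2.
  by rewrite -!(emb2_char2E K2) rmorphD rmorphM.
by move=> H _; rewrite sidxK.
Qed.

Lemma ker_Phi_vanishing_of_fits (c : {set 'I_n} -> 'F_2) :
  fits s t i (boolfun c) ->
  forall P, Phi s t i P = 0 -> P.@[fun k => emb2 K (c (sval_of k))] = 0.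
Proof.
case/(fits_iff_coset t hs) => g cE P /Phi_eq0 /(_ (fun k => emb2 K (red g (sval_of k)))).
by under meval_eq => k do rewrite -{1}(sval_ofK k) Wpol_meval_coset -cE.
Qed.

End KernelOfPhi.

Theorem mainTheorem1 (K : closedFieldType) (hK : 2%N \in [pchar K])
  (n r : nat) (hn : (0 < n)%N) (hr : (0 < r)%N)
  (s t : 'I_r -> 'I_n -> 'F_2) (hs : injective s) (i : 'I_n) :
  (forall P : {mpoly K[Nsub n]},
     Phi s t i P = 0 <->
     (forall b : 'I_(Nsub n) -> K, P.@[fun k => (Wpol K s t i k).@[b]] = 0))
  /\
  (forall c : {set 'I_n} -> 'F_2,
     ((forall P : {mpoly K[Nsub n]}, Phi s t i P = 0 ->
         P.@[fun k => emb2 K (c (sval_of k))] = 0)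
      <-> fits s t i (boolfun c))
     /\
     (fits s t i (boolfun c) <->
      exists g : {mpoly 'F_2[n]},
        forall S : {set 'I_n}, c S = red (fpol 'F_2 s t i + g * ppol 'F_2 s) S)).
Proof.
split=> [P|c]; first exact: Phi_eq0.
split; last exact: fits_iff_coset.
split; [exact: fits_of_ker_Phi_vanishing | exact: ker_Phi_vanishing_of_fits].
Qed.
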